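(* Let $G$ be a simplicial group such that $\pi_1(G)$ is finite. Then $H^2(G,\mathbb Z)\cong H^2(\pi_0(G),\mathbb Z)$, where $\mathbb Z$ carries the trivial action.
   Context: Simplicial group $G$ with faces $d_k$; Moore complex $N_0G=G_0$, $N_nG=\bigcap_{k=1}^n\ker d_k$ with differential $d_0$; $B_nNG=d_0(N_{n+1}G)$; $\pi_0(G)=G_0/B_0NG$, $\pi_1(G)=(N_1G\cap\ker d_0)/B_1NG$. $H^n(G,M)$ is the cohomology of $C^n(G,M)=\mathrm{Map}(G_{n-1}\times\cdots\times G_0,M)$ with $(dc)(g_n,\dots,g_0)=c(d_0g_n,\dots,d_0g_1)+\sum_{k=1}^n(-1)^kc(d_kg_n,\dots,d_kg_{k+1},(d_kg_k)g_{k-1},g_{k-2},\dots,g_0)+(-1)^{n+1}\langle g_n\rangle\cdot c(g_{n-1},\dots,g_0)$, $\langle g\rangle$ being the class of $d_1\cdots d_n(g)$ in $\pi_0(G)$ (for trivial coefficients the action is trivial). $H^2(\pi_0(G),\mathbb Z)$ is ordinary group cohomology. *)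

From HB Require Import structures.
From mathcomp Require Import all_boot all_order all_algebra.
From Stdlib Require List.
Unset Printing Implicit Defensive.
Import Order.TTheory GRing.Theory Num.Theory.
Local Open Scope ring_scope.

Record grp := Grp {
  gcar :> Type;
  gmul : gcar -> gcar -> gcar;
  gone : gcar;
  ginv : gcar -> gcar;
  gmulA : forall x y z, gmul x (gmul y z) = gmul (gmul x y) z;
  gmul1l : forall x, gmul gone x = x;
  gmulVl : forall x, gmul (ginv x) x = gone
}.
Arguments gmul {g}. Arguments gone {g}. Arguments ginv {g}.

Definition is_hom (A B : grp) (f : A -> B) :=
  forall x y, f (gmul x y) = gmul (f x) (f y).
Arguments is_hom {A B}.

(* ---------- Simplicial groups ----------
   sg n = G_n; face n i : G_{n+1} -> G_n is d_i (0 <= i <= n+1);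
   degen n j : G_n -> G_{n+1} is s_j (0 <= j <= n). *)
Record sgrp := SGrp {
  sg : nat -> grp;
  face : forall n, nat -> sg n.+1 -> sg n;
  degen : forall n, nat -> sg n -> sg n.+1;
  face_hom : forall n i, (i <= n.+1)%N -> is_hom (face n i);
  degen_hom : forall n j, (j <= n)%N -> is_hom (degen n j);
  face_face : forall n i j (x : sg n.+2), (i < j <= n.+2)%N ->
     face n i (face n.+1 j x) = face n j.-1 (face n.+1 i x);
  face_degen_lt : forall n i j (x : sg n.+1), (i < j <= n.+1)%N ->
     face n.+1 i (degen n.+1 j x) = degen n j.-1 (face n i x);
  face_degen_eq : forall n j (x : sg n), (j <= n)%N ->
     face n j (degen n j x) = x /\ face n j.+1 (degen n j x) = x;
  face_degen_gt : forall n i j (x : sg n.+1), (j.+1 < i <= n.+2)%N ->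
     face n.+1 i (degen n.+1 j x) = degen n j (face n i.-1 x);
  degen_degen : forall n i j (x : sg n), (i <= j <= n)%N ->
     degen n.+1 i (degen n j x) = degen n.+1 j.+1 (degen n i x)
}.

Section Moore.
Variable G : sgrp.

(* N_{n+1} G = intersection of ker d_k, 1 <= k <= n+1 ;  N_0 G = G_0 *)
Definition NG (n : nat) (x : sg G n.+1) : Prop :=
  forall k, (1 <= k <= n.+1)%N -> face G n k x = gone.

Definition BNG (n : nat) (y : sg G n) : Prop :=
  exists2 x, NG n x & face G n 0 x = y.

Definition Z1NG (x : sg G 1) : Prop := NG 0 x /\ face G 0 0 x = gone.

(* pi_1(G) = Z1NG / B_1NG is finite: finitely many cosets *)
Definition pi1_finite : Prop :=
  exists s : seq (sg G 1),
    (forall x, List.In x s -> Z1NG x) /\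
    (forall z, Z1NG z -> exists2 x, List.In x s & BNG 1 (gmul (ginv x) z)).

(* (Q, p) presents pi_0(G) = G_0 / B_0NG *)
Definition presents_pi0 (Q : grp) (p : sg G 0 -> Q) : Prop :=
  [/\ is_hom p, (forall q, exists y, p y = q) & (forall y, p y = gone <-> BNG 0 y)].

(* ---------- cochains C^n(G,Z) = Map(G_{n-1} x ... x G_0, Z) ---------- *)
Fixpoint STup (n : nat) : Type :=
  match n with 0 => unit | m.+1 => (sg G m * STup m)%type end.

(* (g_n,...,g_0) |-> (d_k g_n, ..., d_k g_{k+1}, (d_k g_k) g_{k-1}, g_{k-2}, ..., g_0) *)
Fixpoint sdelta (n k : nat) : STup n.+1 -> STup n :=
  match n return STup n.+1 -> STup n with
  | 0 => fun _ => tt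
  | m.+1 => fun t =>
      if (k <= m)%N then (face G m k t.1, sdelta m k t.2)
      else (gmul (face G m m.+1 t.1) t.2.1, t.2.2)
  end.

Definition sdiff (n : nat) (c : STup n -> int) : STup n.+1 -> int :=
  fun t => \sum_(k < n.+1) (-1) ^+ k * c (sdelta n k t) + (-1) ^+ n.+1 * c t.2.

Definition scocycle (n : nat) (c : STup n -> int) : Prop :=
  forall t, sdiff n c t = 0.

Definition scobound (n : nat) : (STup n -> int) -> Prop :=
  match n with
  | 0 => fun c => forall t, c t = 0
  | m.+1 => fun c => exists b : STup m -> int, forall t, c t = sdiff m b t
  end.
End Moore.

Section GroupCohom.
Variable Q : grp.

Fixpoint QTup (n : nat) : Type :=
  match n with 0 => unit | m.+1 => (gcar Q * QTup m)%type end.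

(* (q_1,...,q_{n+1}) |-> (q_1,...,q_{i+1} q_{i+2},...,q_{n+1})   (0 <= i < n) *)
Fixpoint qmerge (n i : nat) : QTup n.+1 -> QTup n :=
  match n return QTup n.+1 -> QTup n with
  | 0 => fun _ => tt
  | m.+1 => fun t =>
      match i with
      | 0 => (gmul t.1 t.2.1, t.2.2)
      | j.+1 => (t.1, qmerge m j t.2)
      end
  end.

Fixpoint qdroplast (n : nat) : QTup n.+1 -> QTup n :=
  match n return QTup n.+1 -> QTup n with
  | 0 => fun _ => tt
  | m.+1 => fun t => (t.1, qdroplast m t.2)
  end.

Definition qdiff (n : nat) (c : QTup n -> int) : QTup n.+1 -> int :=
  fun t => c t.2 + \sum_(i < n) (-1) ^+ i.+1 * c (qmerge n i t)
           + (-1) ^+ n.+1 * c (qdroplast n t).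

Definition qcocycle (n : nat) (c : QTup n -> int) : Prop :=
  forall t, qdiff n c t = 0.

Definition qcobound (n : nat) : (QTup n -> int) -> Prop :=
  match n with
  | 0 => fun c => forall t, c t = 0
  | m.+1 => fun c => exists b : QTup m -> int, forall t, c t = qdiff m b t
  end.
End GroupCohom.

(* An isomorphism of abelian groups ZA/BA ~= ZB/BB (subquotients of the
   pointwise groups X -> int and Y -> int), described on representatives:
   f induces a well-defined, additive, injective and surjective map. *)
Definition quot_iso (X Y : Type)
    (ZA BA : (X -> int) -> Prop) (ZB BB : (Y -> int) -> Prop) : Prop :=
  exists f : (X -> int) -> (Y -> int),
  [/\ forall a, ZA a -> ZB (f a),
      forall a a', ZA a -> ZA a' -> BA (fun x => a x - a' x) ->
                   BB (fun y => f a y - f a' y),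
      forall a a', ZA a -> ZA a' ->
                   BB (fun y => f (fun x => a x + a' x) y - f a y - f a' y),
      forall a, ZA a -> BB (f a) -> BA a
    & forall b, ZB b -> exists2 a, ZA a & BB (fun y => b y - f a y)].

Definition Hn_iso (G : sgrp) (Q : grp) (n : nat) : Prop :=
  quot_iso (STup G n) (QTup Q n) (@scocycle G n) (@scobound G n) (@qcocycle Q n) (@qcobound Q n).

(* A 2-cocycle c of G is first normalised using the simplicial identities:
   modulo a coboundary it becomes c(x, g) = V(d_1 x, g) for a function V on
   G_0 x G_0.  V descends to pi_0(G) = G_0 / B_0 in both variables as soon as
   c(z, 1) takes the same value a = c(1, 1) on every 1-cycle z.  Now
   z |-> c(z, 1) - a is additive on 1-cycles and vanishes on B_1, and since
   pi_1(G) is finite every 1-cycle has a positive power in B_1; as Z is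
   torsion-free the function vanishes on all 1-cycles.  Conversely a cocycle
   of pi_0(G) pulls back along p o d_1, and the two constructions are mutually
   inverse up to coboundaries. *)
From mathcomp Require Import all_boot all_order all_algebra.
From mathcomp Require Import ring zify.
From Stdlib Require Import ClassicalEpsilon.
Import GRing.Theory.
Local Open Scope ring_scope.

Arguments gmulA {g}. Arguments gmul1l {g}. Arguments gmulVl {g}.

Section GroupTheory.
Variable A : grp.
Local Notation "x * y" := (gmul x y).
Local Notation "x ^-1" := (ginv x).
Local Notation "1" := (@gone A).

Lemma gmulVr (x : A) : x * x^-1 = 1.
Proof.
have idem : (x * x^-1) * (x * x^-1) = x * x^-1.
  by rewrite -gmulA (gmulA x^-1 x) gmulVl gmul1l.
by rewrite -[LHS]gmul1l -(gmulVl (x * x^-1)) -gmulA idem.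
Qed.

Lemma gmul1r (x : A) : x * 1 = x.
Proof. by rewrite -(gmulVl x) gmulA gmulVr gmul1l. Qed.

Lemma gmulKl (x y : A) : x^-1 * (x * y) = y.
Proof. by rewrite gmulA gmulVl gmul1l. Qed.

Lemma gmulKr (x y : A) : x * (x^-1 * y) = y.
Proof. by rewrite gmulA gmulVr gmul1l. Qed.

Lemma gmulI (x y z : A) : x * y = x * z -> y = z.
Proof. by move=> e; rewrite -(gmulKl x y) e gmulKl. Qed.

Lemma ginv_unique (x y : A) : y * x = 1 -> y = x^-1.
Proof.
by move=> e; apply: (gmulI x); apply: (gmulI y); rewrite gmulVr gmul1r gmulA e gmul1l.
Qed.

Lemma ginvM (x y : A) : (x * y)^-1 = y^-1 * x^-1.
Proof.
by symmetry; apply: ginv_unique; rewrite gmulA -(gmulA _ _ x) gmulVl gmul1r gmulVl.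
Qed.

Lemma ginvK (x : A) : (x^-1)^-1 = x.
Proof. by symmetry; apply: ginv_unique; apply: gmulVr. Qed.

Lemma ginv1 : 1^-1 = 1.
Proof. by symmetry; apply: ginv_unique; apply: gmul1l. Qed.

Fixpoint gpow (z : A) (n : nat) : A := if n is k.+1 then z * gpow z k else 1.

Lemma gpowD (z : A) i j : gpow z (i + j) = gpow z i * gpow z j.
Proof. by elim: i => [|i IH] /=; rewrite ?gmul1l // IH gmulA. Qed.

Lemma gpow1 n : gpow 1 n = 1.
Proof. by elim: n => [|n IH] //=; rewrite IH gmul1l. Qed.
End GroupTheory.

Arguments gmulVr {A}. Arguments gmul1r {A}. Arguments gmulKl {A}.
Arguments gmulKr {A}. Arguments gmulI {A}. Arguments ginv_unique {A}.
Arguments ginvM {A}. Arguments ginvK {A}.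
Arguments ginv1 {A}. Arguments gpow {A}.

Section Morphism.
Variables (A B : grp) (f : A -> B).
Hypothesis fM : is_hom f.

Lemma hom1 : f gone = gone.
Proof. by apply: (gmulI (f gone)); rewrite -fM !gmul1r. Qed.

Lemma homV x : f (ginv x) = ginv (f x).
Proof. by apply: ginv_unique; rewrite -fM gmulVl hom1. Qed.

Lemma hom_gpow z n : f (gpow z n) = gpow (f z) n.
Proof. by elim: n => [|n IH] /=; rewrite ?hom1 // fM IH. Qed.
End Morphism.

Arguments hom1 {A B f}. Arguments homV {A B f}. Arguments hom_gpow {A B f}.

Section LowDegree.
Variable G : sgrp.
Local Notation d0 := (face G 0 0).
Local Notation d1 := (face G 0 1).
Local Notation D0 := (face G 1 0).
Local Notation D1 := (face G 1 1).
Local Notation D2 := (face G 1 2).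
Local Notation s0 := (degen G 0 0).
Local Notation S0 := (degen G 1 0).
Local Notation S1 := (degen G 1 1).
Local Notation "x * y" := (gmul x y).

Lemma d0M : is_hom d0. Proof. exact: face_hom. Qed.
Lemma d1M : is_hom d1. Proof. exact: face_hom. Qed.
Lemma D0M : is_hom D0. Proof. exact: face_hom. Qed.
Lemma D1M : is_hom D1. Proof. exact: face_hom. Qed.
Lemma D2M : is_hom D2. Proof. exact: face_hom. Qed.
Lemma s0M : is_hom s0. Proof. exact: degen_hom. Qed.

Lemma d0s0 y : d0 (s0 y) = y. Proof. by case: (face_degen_eq G 0 0 y isT). Qed.
Lemma d1s0 y : d1 (s0 y) = y. Proof. by case: (face_degen_eq G 0 0 y isT). Qed.
Lemma D0S0 y : D0 (S0 y) = y. Proof. by case: (face_degen_eq G 1 0 y isT). Qed.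
Lemma D1S0 y : D1 (S0 y) = y. Proof. by case: (face_degen_eq G 1 0 y isT). Qed.
Lemma D1S1 y : D1 (S1 y) = y. Proof. by case: (face_degen_eq G 1 1 y isT). Qed.
Lemma D2S1 y : D2 (S1 y) = y. Proof. by case: (face_degen_eq G 1 1 y isT). Qed.
Lemma D0S1 x : D0 (S1 x) = s0 (d0 x). Proof. exact: (face_degen_lt G 0 0 1 x isT). Qed.
Lemma D2S0 x : D2 (S0 x) = s0 (d1 x). Proof. exact: (face_degen_gt G 0 2 0 x isT). Qed.
Lemma d0D1 z : d0 (D1 z) = d0 (D0 z). Proof. exact: (face_face G 0 0 1 z isT). Qed.
Lemma d0D2 z : d0 (D2 z) = d1 (D0 z). Proof. exact: (face_face G 0 0 2 z isT). Qed.
Lemma d1D2 z : d1 (D2 z) = d1 (D1 z). Proof. exact: (face_face G 0 1 2 z isT). Qed.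

Lemma NG0P x : NG G 0 x <-> d1 x = gone.
Proof.
split=> [|x1 k /andP[k1 k2]]; first exact.
by have -> : k = 1%N by apply/eqP; rewrite eqn_leq k1 k2.
Qed.

Lemma NG1P x : NG G 1 x <-> D1 x = gone /\ D2 x = gone.
Proof.
split=> [xN|[x1 x2] [|[|[|k]]] //]; first by split; apply: xN.
Qed.

Lemma BNG0P n : BNG G 0 n <-> exists2 x, d1 x = gone & d0 x = n.
Proof. by split=> -[x /NG0P x1 xn]; exists x. Qed.

Lemma BNG1_divg u v : BNG G 1 u -> BNG G 1 v -> BNG G 1 (gmul (ginv u) v).
Proof.
case=> x /NG1P[x1 x2] <-; case=> y /NG1P[y1 y2] <-.
exists (ginv x * y); last by rewrite D0M (homV D0M).
by apply/NG1P; rewrite D1M D2M (homV D1M) (homV D2M) x1 x2 y1 y2 ginv1 !gmul1l.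
Qed.

Lemma sdiff1E (b : STup G 1 -> int) g1 g0 :
  sdiff G 1 b (g1, (g0, tt)) = b (d0 g1, tt) - b (d1 g1 * g0, tt) + b (g0, tt).
Proof. by rewrite /sdiff !big_ord_recr big_ord0 /= !exprS expr0; ring. Qed.

Lemma sdiff2E (c : STup G 2 -> int) g2 g1 g0 :
  sdiff G 2 c (g2, (g1, (g0, tt))) =
  c (D0 g2, (d0 g1, tt)) - c (D1 g2, (d1 g1 * g0, tt))
  + c (D2 g2 * g1, (g0, tt)) - c (g1, (g0, tt)).
Proof. by rewrite /sdiff !big_ord_recr big_ord0 /= !exprS expr0; ring. Qed.

Lemma sdiff2_sdiff1 (b : STup G 1 -> int) t : sdiff G 2 (sdiff G 1 b) t = 0.
Proof.
case: t => g2 [g1 [g0 []]].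
by rewrite sdiff2E !sdiff1E d0M d1M d0D1 d0D2 d1D2 -!gmulA; ring.
Qed.

Lemma sdiff2_ext (c e : STup G 2 -> int) :
  (forall t, c t = e t) -> forall t, sdiff G 2 c t = sdiff G 2 e t.
Proof. by move=> ce [g2 [g1 [g0 []]]]; rewrite !sdiff2E !ce. Qed.

Lemma sdiff2D (c e : STup G 2 -> int) t :
  sdiff G 2 (fun t => c t + e t) t = sdiff G 2 c t + sdiff G 2 e t.
Proof. by case: t => g2 [g1 [g0 []]]; rewrite !sdiff2E; ring. Qed.

Lemma sdiff2B (c e : STup G 2 -> int) t :
  sdiff G 2 (fun t => c t - e t) t = sdiff G 2 c t - sdiff G 2 e t.
Proof. by case: t => g2 [g1 [g0 []]]; rewrite !sdiff2E; ring. Qed.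

Lemma pi1_finite_torsion z : pi1_finite G -> Z1NG G z ->
  exists2 n, (0 < n)%N & BNG G 1 (gpow z n).
Proof.
case=> s [_ cover] [/NG0P z1 z0].
have zZ i : Z1NG G (gpow z i).
  by split; [apply/NG0P; rewrite (hom_gpow d1M) z1 | rewrite (hom_gpow d0M) z0]; rewrite gpow1.
(* pigeonhole: two of the powers z^0, ..., z^|s| share a coset of B_1 *)
have slot (i : 'I_(length s).+1) : exists k : 'I_(length s),
    BNG G 1 (gmul (ginv (List.nth k s gone)) (gpow z i)).
  have [x /(List.In_nth _ _ gone) [k [/ltP ks <-]] xz] := cover _ (zZ i).
  by exists (Ordinal ks).
have [f fP] := fin_all_exists slot.
have [/injectiveP inj | /injectivePn [i [j ij fij]]] := boolP (injectiveb f).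
  by have := leq_card f inj; rewrite !card_ord ltnn.
wlog lt_ij : i j ij fij / (i < j)%N.
  move=> gen; case: (ltngtP i j) => [|ji|/val_inj eij]; first exact: gen.
  - by apply: (gen j i) => //; rewrite eq_sym.
  - by rewrite eij eqxx in ij.
exists (j - i)%N; first by rewrite subn_gt0.
have := BNG1_divg _ _ (fP i) (fP j); rewrite fij ginvM ginvK -gmulA gmulKr.
by rewrite -{1}(subnKC (ltnW lt_ij)) gpowD gmulKl.
Qed.
End LowDegree.

Section GroupCochains.
Variable Q : grp.
Local Notation "x * y" := (gmul x y).

Lemma qdiff1E (b : QTup Q 1 -> int) q1 q2 :
  qdiff Q 1 b (q1, (q2, tt)) = b (q2, tt) - b (q1 * q2, tt) + b (q1, tt).
Proof. by rewrite /qdiff !big_ord_recr big_ord0 /= !exprS expr0; ring. Qed.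

Lemma qdiff2E (c : QTup Q 2 -> int) q1 q2 q3 :
  qdiff Q 2 c (q1, (q2, (q3, tt))) =
  c (q2, (q3, tt)) - c (q1 * q2, (q3, tt)) + c (q1, (q2 * q3, tt)) - c (q1, (q2, tt)).
Proof. by rewrite /qdiff !big_ord_recr big_ord0 /= !exprS expr0; ring. Qed.
End GroupCochains.

Section Pi0.
Variables (G : sgrp) (Q : grp) (p : sg G 0 -> Q).
Hypothesis pP : presents_pi0 G Q p.
Local Notation d0 := (face G 0 0).
Local Notation d1 := (face G 0 1).
Local Notation D1 := (face G 1 1).
Local Notation s0 := (degen G 0 0).
Local Notation S0 := (degen G 1 0).
Local Notation "x * y" := (gmul x y).

Lemma pM : is_hom p. Proof. by case: pP. Qed.
Lemma p_surj q : exists y, p y = q. Proof. by case: pP. Qed.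
Lemma p_eq1 y : p y = gone <-> BNG G 0 y. Proof. by case: pP. Qed.

Definition psec (q : Q) : sg G 0 := proj1_sig (constructive_indefinite_description _ (p_surj q)).

Lemma psecK q : p (psec q) = q.
Proof. exact: proj2_sig (constructive_indefinite_description _ (p_surj q)). Qed.

Lemma p_eqP y y' : p y = p y' -> exists2 n, BNG G 0 n & y' = y * n.
Proof.
move=> e; exists (ginv y * y'); last by rewrite gmulKr.
by apply/p_eq1; rewrite pM (homV pM) e gmulVl.
Qed.

Lemma p_d0 x : p (d0 x) = p (d1 x).
Proof.
have /p_eq1 : BNG G 0 (d0 (ginv (s0 (d1 x)) * x)).
  by apply/BNG0P; exists (ginv (s0 (d1 x)) * x); rewrite // d1M (homV (d1M G)) d1s0 gmulVl.
rewrite d0M (homV (d0M G)) d0s0 pM (homV pM) => e.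
by rewrite -(gmulKr (p (d1 x)) (p (d0 x))) e gmul1r.
Qed.

(* Inverse of the isomorphism, up to coboundaries. *)
Definition pullback (h : QTup Q 2 -> int) : STup G 2 -> int :=
  fun t => h (p (d1 t.1), (p t.2.1, tt)).

Lemma pullbackB h h' t :
  pullback (fun y => h y - h' y) t = pullback h t - pullback h' t.
Proof. by []. Qed.

Lemma pullback_cocycle h : qcocycle Q 2 h -> scocycle G 2 (pullback h).
Proof.
move=> hc [g2 [g1 [g0 []]]].
have := hc (p (d1 (D1 g2)), (p (d1 g1), (p g0, tt))).
rewrite sdiff2E qdiff2E /pullback /= !d1M !pM -d0D2 p_d0 d1D2 p_d0.
lia.
Qed.

Lemma pullback_cocycleW h : scocycle G 2 (pullback h) -> qcocycle Q 2 h.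
Proof.
move=> hc [q1 [q2 [q3 []]]].
have [[y1 <-] [y2 <-] [y3 <-]] := And3 (p_surj q1) (p_surj q2) (p_surj q3).
have := hc (S0 (s0 y1), (s0 y2, (y3, tt))).
rewrite sdiff2E qdiff2E /pullback /= D0S0 D1S0 D2S0 d1M !d1s0 d0s0 !pM.
lia.
Qed.

Lemma pullback_coboundW h : scobound G 2 (pullback h) -> qcobound Q 2 h.
Proof.
case=> b hb.
have hbE y g : h (p y, (p g, tt)) = b (y, tt) - b (y * g, tt) + b (g, tt).
  by have := hb (s0 y, (g, tt)); rewrite sdiff1E /pullback /= d0s0 d1s0.
have bB0 y n : BNG G 0 n -> b (y * n, tt) = b (y, tt).
  case/BNG0P => x x1 <-.
  have := hb (s0 y * x, (gone, tt)).
  rewrite sdiff1E /pullback /= d1M d0M x1 d1s0 d0s0 gmul1r hbE.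
  lia.
have b_psec y : b (psec (p y), tt) = b (y, tt).
  by have [n nB ->] := p_eqP _ _ (esym (psecK (p y))); rewrite bB0.
exists (fun t => b (psec t.1, tt)) => -[q1 [q2 []]].
have q12 : q1 * q2 = p (psec q1 * psec q2) by rewrite pM !psecK.
rewrite qdiff1E /= q12 b_psec -{1}(psecK q1) -{1}(psecK q2) hbE.
lia.
Qed.
End Pi0.

Arguments pullback {G Q} p h t.

Section Normalisation.
Variables (G : sgrp) (Q : grp) (p : sg G 0 -> Q).
Hypotheses (pP : presents_pi0 G Q p) (Gfin : pi1_finite G).
Variable c : STup G 2 -> int.
Hypothesis cC : scocycle G 2 c.
Local Notation d0 := (face G 0 0).
Local Notation d1 := (face G 0 1).
Local Notation D0 := (face G 1 0).
Local Notation D1 := (face G 1 1).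
Local Notation D2 := (face G 1 2).
Local Notation s0 := (degen G 0 0).
Local Notation S0 := (degen G 1 0).
Local Notation S1 := (degen G 1 1).
Local Notation "x * y" := (gmul x y).
Local Notation a := (c (gone, (gone, tt))).

Lemma cocycleE g2 g1 g0 :
  c (D0 g2, (d0 g1, tt)) - c (D1 g2, (d1 g1 * g0, tt))
  + c (D2 g2 * g1, (g0, tt)) - c (g1, (g0, tt)) = 0.
Proof. by rewrite -sdiff2E; apply: cC. Qed.

Lemma cocycle_1l g : c (gone, (g, tt)) = a.
Proof.
have := cocycleE gone gone g.
rewrite !(hom1 (D0M G)) !(hom1 (D1M G)) !(hom1 (D2M G)) (hom1 (d0M G)) (hom1 (d1M G)).
rewrite !gmul1l; lia.
Qed.

Lemma cocycle_split x g :
  c (x, (g, tt)) = c (x, (gone, tt)) + c (s0 (d1 x), (g, tt)) - a.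
Proof.
have := cocycleE (S0 x) gone g.
rewrite D0S0 D1S0 D2S0 (hom1 (d0M G)) (hom1 (d1M G)) gmul1l gmul1r cocycle_1l; lia.
Qed.

Lemma cocycle_s0_1 y : c (s0 y, (gone, tt)) = a.
Proof.
have := cocycleE (S1 (s0 y)) gone gone.
rewrite D0S1 D1S1 D2S1 (hom1 (d0M G)) (hom1 (d1M G)) gmul1l gmul1r d0s0; lia.
Qed.

Lemma cocycle_s0 y g h : c (s0 y, (g, tt)) - c (s0 y, (g * h, tt))
  + c (s0 (y * g), (h, tt)) - c (s0 g, (h, tt)) = 0.
Proof.
have := cocycleE (S0 (s0 y)) (s0 g) h.
by rewrite D0S0 D1S0 D2S0 d1s0 d0s0 -(s0M G) d1s0.
Qed.

Lemma cocycle_mul_1 x x' : d1 x' = gone -> c (x * x', (gone, tt)) =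
  c (x', (gone, tt)) + c (x, (gone, tt)) - c (s0 (d0 x), (d0 x', tt)).
Proof.
move=> x'1; have := cocycleE (S1 x) x' gone.
rewrite D0S1 D1S1 D2S1 x'1 gmul1l; lia.
Qed.

Lemma cocycle_B1 y : NG G 1 y -> c (D0 y, (gone, tt)) = a.
Proof.
case/NG1P => y1 y2; have := cocycleE y gone gone.
rewrite y1 y2 (hom1 (d0M G)) (hom1 (d1M G)) !gmul1l; lia.
Qed.

Lemma cocycle_gpow_1 z n : Z1NG G z ->
  c (gpow z n, (gone, tt)) - a = (c (z, (gone, tt)) - a) *+ n.
Proof.
case=> /NG0P z1 z0; elim: n => [|n IH] /=; first by rewrite subrr mulr0n.
rewrite cocycle_mul_1; last by rewrite (hom_gpow (d1M G)) z1 gpow1.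
rewrite (hom_gpow (d0M G)) z0 gpow1 (hom1 (s0M G)) mulrS -IH; ring.
Qed.

(* The only use of the finiteness of pi_1. *)
Lemma cocycle_Z1 z : Z1NG G z -> c (z, (gone, tt)) = a.
Proof.
move=> zZ; have [n n_gt0 [y yN yz]] := pi1_finite_torsion G z Gfin zZ.
have := cocycle_gpow_1 z n zZ; rewrite -yz cocycle_B1 // subrr => /esym/eqP.
by rewrite Num.Theory.mulrn_eq0 subr_eq0 eqn0Ngt n_gt0 => /eqP.
Qed.

(* The common value of c(x, 1) over the x in N_1 with d_0 x = n (it does not
   depend on x by cocycle_Z1); junk value 0 outside B_0. *)
Definition cB0 (n : sg G 0) : int :=
  match excluded_middle_informative (exists x, d1 x = gone /\ d0 x = n) with
  | left ex => c (proj1_sig (constructive_indefinite_description _ ex), (gone, tt))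
  | right _ => 0
  end.

Lemma cB0E x : d1 x = gone -> cB0 (d0 x) = c (x, (gone, tt)).
Proof.
move=> x1; rewrite /cB0; case: excluded_middle_informative => [ex|[]]; last by exists x.
case: constructive_indefinite_description => x0 [x01 x00] /=.
have z1 : d1 (ginv x0 * x) = gone by rewrite d1M (homV (d1M G)) x01 x1 ginv1 gmul1l.
have z0 : d0 (ginv x0 * x) = gone by rewrite d0M (homV (d0M G)) x00 gmulVl.
have zZ : Z1NG G (ginv x0 * x) by split=> //; apply/NG0P.
by rewrite -(gmulKr x0 x) cocycle_mul_1 // (cocycle_Z1 _ zZ) z0 cocycle_s0_1; ring.
Qed.

Lemma cB0M x x' : d1 x = gone -> d1 x' = gone ->
  cB0 (d0 x * d0 x') = cB0 (d0 x) + cB0 (d0 x') - c (s0 (d0 x), (d0 x', tt)).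
Proof.
move=> x1 x'1; have xx'1 : d1 (x * x') = gone by rewrite d1M x1 x'1 gmul1l.
by rewrite -d0M !cB0E // cocycle_mul_1 //; ring.
Qed.

Local Notation psec := (psec G Q p pP).

Definition deviation g := ginv (psec (p g)) * g.

Lemma deviation_B0 g : BNG G 0 (deviation g).
Proof. by apply/(p_eq1 _ _ _ pP); rewrite (pM _ _ _ pP) (homV (pM _ _ _ pP)) psecK gmulVl. Qed.

Definition cb g := c (s0 (psec (p g)), (deviation g, tt)) - cB0 (deviation g).

Lemma cbM_B0 g n : BNG G 0 n -> cb (g * n) = cb g + c (s0 g, (n, tt)) - cB0 n.
Proof.
move=> nB.
have pgn : psec (p (g * n)) = psec (p g).
  by rewrite (pM _ _ _ pP) (proj2 (p_eq1 _ _ _ pP n) nB) gmul1r.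
have devM : deviation (g * n) = deviation g * n by rewrite /deviation pgn gmulA.
have cB0dev : cB0 (deviation g * n) =
    cB0 (deviation g) + cB0 n - c (s0 (deviation g), (n, tt)).
  have /BNG0P[x x1 <-] := deviation_B0 g; case/BNG0P: nB => x' x'1 <-.
  exact: cB0M.
have := cocycle_s0 (psec (p g)) (deviation g) n.
rewrite /cb pgn devM cB0dev gmulKr; lia.
Qed.

Lemma cocycle_1r x : c (x, (gone, tt)) = cb (d1 x) - cb (d0 x) + a.
Proof.
pose x' := ginv (s0 (d1 x)) * x.
have x'1 : d1 x' = gone by rewrite d1M (homV (d1M G)) d1s0 gmulVl.
have xE : x = s0 (d1 x) * x' by rewrite gmulKr.
have -> : d0 x = d1 x * d0 x' by rewrite {1}xE d0M d0s0.
rewrite cbM_B0; last by apply/BNG0P; exists x'.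
by rewrite {1}xE cocycle_mul_1 // cB0E // cocycle_s0_1 d0s0; ring.
Qed.

Definition cb1 (t : STup G 1) : int := - cb t.1.

Definition cV y g := c (s0 y, (g, tt)) + cb y - cb (y * g) + cb g.

Lemma cocycle_normalE x g : c (x, (g, tt)) - sdiff G 1 cb1 (x, (g, tt)) = cV (d1 x) g.
Proof. by rewrite cocycle_split cocycle_1r sdiff1E /cb1 /cV /=; ring. Qed.

Lemma cV_cocycleE g2 g1 g0 : cV (d1 (D0 g2)) (d0 g1) - cV (d1 (D1 g2)) (d1 g1 * g0)
   + cV (d1 (D2 g2 * g1)) g0 - cV (d1 g1) g0 = 0.
Proof.
have := sdiff2B G c (sdiff G 1 cb1) (g2, (g1, (g0, tt))).
by rewrite cC sdiff2_sdiff1 subr0 sdiff2E !cocycle_normalE.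
Qed.

Lemma cV_d0l x g : cV (d0 x) g = cV (d1 x) g.
Proof.
have := cV_cocycleE (S1 x) (s0 g) gone.
have := cV_cocycleE (S0 (s0 (d1 x))) (s0 g) gone.
rewrite D0S1 D1S1 D2S1 D0S0 D1S0 D2S0 !d1M !d1s0 !d0s0; lia.
Qed.

Lemma cV_d0r y g : cV y (d0 g) = cV y (d1 g).
Proof.
have := cV_cocycleE (S0 (s0 y)) g gone.
have := cV_cocycleE (S0 (s0 y)) (s0 (d1 g)) gone.
rewrite D0S0 D1S0 D2S0 !d1M !d1s0 !d0s0; lia.
Qed.

Lemma cV_p y y' g g' : p y = p y' -> p g = p g' -> cV y g = cV y' g'.
Proof.
move=> /(p_eqP _ _ _ pP)[n /BNG0P[x x1 <-] ->].
move=> /(p_eqP _ _ _ pP)[m /BNG0P[x' x'1 <-] ->].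
have := cV_d0l (s0 y * x) (g * d0 x').
have := cV_d0r y (s0 g * x').
by rewrite !d0M !d1M !d0s0 !d1s0 x1 x'1 !gmul1r => -> ->.
Qed.

Definition descent (t : QTup Q 2) : int := cV (psec t.1) (psec t.2.1).

Lemma pullback_descent t : pullback p descent t = c t - sdiff G 1 cb1 t.
Proof.
case: t => x [g []]; rewrite cocycle_normalE /pullback /descent /=.
by apply: cV_p; rewrite psecK.
Qed.
End Normalisation.

Section Isomorphism.
Variables (G : sgrp) (Q : grp) (p : sg G 0 -> Q).
Hypotheses (pP : presents_pi0 G Q p) (Gfin : pi1_finite G).
Local Notation descent := (descent G Q p pP).
Local Notation cb1 := (cb1 G Q p pP).
Local Notation pullback_descent := (pullback_descent G Q p pP Gfin).

Lemma descent_cocycle c : scocycle G 2 c -> qcocycle Q 2 (descent c).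
Proof.
move=> cC; apply: (pullback_cocycleW G Q p pP) => t.
by rewrite (sdiff2_ext G _ _ (pullback_descent c cC)) sdiff2B cC sdiff2_sdiff1 subr0.
Qed.

Lemma descent_cobound c c' : scocycle G 2 c -> scocycle G 2 c' ->
  scobound G 2 (fun t => c t - c' t) -> qcobound Q 2 (fun y => descent c y - descent c' y).
Proof.
move=> cC c'C [b bE]; apply: (pullback_coboundW G Q p pP).
exists (fun t => b t - cb1 c t + cb1 c' t) => -[x [g []]].
have := bE (x, (g, tt)).
by rewrite pullbackB !pullback_descent // !sdiff1E /=; lia.
Qed.

Lemma descentD c c' : scocycle G 2 c -> scocycle G 2 c' ->
  qcobound Q 2 (fun y => descent (fun t => c t + c' t) y - descent c y - descent c' y).
Proof.
move=> cC c'C; have cc'C : scocycle G 2 (fun t => c t + c' t).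
  by move=> t; rewrite sdiff2D cC c'C addr0.
apply: (pullback_coboundW G Q p pP).
exists (fun t => - cb1 (fun t => c t + c' t) t + cb1 c t + cb1 c' t) => -[x [g []]].
by rewrite !pullbackB !pullback_descent // !sdiff1E /=; lia.
Qed.

Lemma descent_inj c : scocycle G 2 c -> qcobound Q 2 (descent c) -> scobound G 2 c.
Proof.
move=> cC [b bE]; exists (fun t => b (p t.1, tt) + cb1 c t) => -[x [g []]].
have := pullback_descent c cC (x, (g, tt)).
rewrite /pullback /= bE qdiff1E !sdiff1E /= (pM _ _ _ pP) (p_d0 _ _ _ pP); lia.
Qed.

Lemma descent_surj h : qcocycle Q 2 h ->
  exists2 c, scocycle G 2 c & qcobound Q 2 (fun y => h y - descent c y).
Proof.
move=> hC; have hpC := pullback_cocycle G Q p pP h hC.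
exists (pullback p h) => //; apply: (pullback_coboundW G Q p pP).
exists (cb1 (pullback p h)) => t.
by rewrite pullbackB (pullback_descent _ hpC); ring.
Qed.
End Isomorphism.

Theorem mainTheorem17 (G : sgrp) (Q : grp) (p : sg G 0 -> Q) :
  presents_pi0 G Q p -> pi1_finite G -> Hn_iso G Q 2.
Proof.
move=> pP Gfin; exists (descent G Q p pP); split.
- exact: descent_cocycle.
- exact: descent_cobound.
- exact: descentD.
- exact: descent_inj.
- exact: descent_surj.
Qed.
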